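(* An abstract $b$-flip $f$ (a move $(t_1\cup t_2,b)\to(t'_1\cup t'_2,b')$ on a branched quadrilateral) is a sliding flip if and only if the following holds. For every $(S,V)$ and every application of $f$ to a branched ideal triangulation $(T,b)$ of $(S,V)$, producing $(T',b')$, one has $d_b(v)=d_{b'}(v)$ for every $v\in V$.
   Context: $(S,V)$ denotes a closed surface with a finite set of marked points, $\chi(S)-|V|<0$. Ideal triangulations have vertex set exactly $V$. A branching $b$ orients all edges so that on each abstract triangle the orientations are induced by a total order $v_0<v_1<v_2$ of its vertices, edges pointing to the larger endpoint. In such a branched triangle, the corner at the middle vertex $v_1$ (the corner formed by the two edges $v_0v_1,v_1v_2$ carrying the ''prevalent'' orientation) is called the $1$-labelled corner. For a vertex $v$, the number of $1$-labelled corners at $v$ is even, and is denoted $2d_b(v)$. An abstract $b$-flip acts on a quadrilateral $Q=t_1\cup t_2$ triangulated by two triangles sharing a diagonal $e$. It replaces them by the two triangles $t'_1,t'_2$ sharing the other diagonal $e'$, with an orientation of $e'$ making the result branched while the boundary edges of $Q$ keep their orientations. Such a $b$-flip is forced if it is the unique branched enhancement of the naked flip starting from $(t_1\cup t_2,b)$. It is a sliding flip ($s$-flip) if at least one of it and its inverse $b$-flip $(t'_1\cup t'_2,b')\to(t_1\cup t_2,b)$ is forced. *)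

From mathcomp Require Import all_boot all_fingroup.
Set Implicit Arguments. Unset Strict Implicit. Unset Printing Implicit Defensive.

(* Branched triangles: an orientation [ar] of the three edges of a    *)
(* triangle with vertices x y z is a branching if it is induced by a  *)
(* total order of x y z (edges point to the larger endpoint).         *)
Definition is_order (T : Type) (ar : T -> T -> bool) (a b c : T) :=
  [&& ar a b, ar b c & ar a c].

Definition branched_tri (T : Type) (ar : T -> T -> bool) (x y z : T) :=
  [|| is_order ar x y z, is_order ar x z y, is_order ar y x z,
      is_order ar y z x, is_order ar z x y | is_order ar z y x].

(* The abstract quadrilateral Q: vertices 0,1,2,3 in cyclic order,    *)
(* diagonal e = {0,2}, t1 = {0,1,2}, t2 = {0,2,3};                    *)
(* other diagonal e' = {1,3}, t1' = {0,1,3}, t2' = {1,2,3}.           *)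
Definition qv (k : nat) : 'I_4 := inord k.
Definition lab (s : seq nat) (i : 'I_3) : 'I_4 := qv (nth 0 s i).
Definition o3 (k : nat) : 'I_3 := inord k.

(* An abstract b-flip (t1 u t2, b) -> (t1' u t2', b'): an orientation   *)
(* [arr x y] ("edge xy points from x to y") of the four boundary edges *)
(* and of both diagonals e, e', such that t1, t2 (branching b) and     *)
(* t1', t2' (branching b') are branched.  Boundary edges carry the     *)
(* same orientation before and after, by construction.                 *)
Record bflip := BFlip {
  arr : 'I_4 -> 'I_4 -> bool;
  arr_anti : forall x y : 'I_4, x != y -> arr y x = ~~ arr x y;
  arr_t1 : branched_tri arr (qv 0) (qv 1) (qv 2);
  arr_t2 : branched_tri arr (qv 0) (qv 2) (qv 3);
  arr_t1' : branched_tri arr (qv 0) (qv 1) (qv 3);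
  arr_t2' : branched_tri arr (qv 1) (qv 2) (qv 3) }.

Definition reor (ar : 'I_4 -> 'I_4 -> bool) (x y : 'I_4) (b : bool) :=
  fun u v => if (u == x) && (v == y) then b
             else if (u == y) && (v == x) then ~~ b else ar u v.

(* f is forced: its orientation of e' is the unique one making the      *)
(* naked flip from (t1 u t2, b) branched.                               *)
Definition forced (f : bflip) : Prop :=
  forall b : bool,
    branched_tri (reor (arr f) (qv 1) (qv 3) b) (qv 0) (qv 1) (qv 3) ->
    branched_tri (reor (arr f) (qv 1) (qv 3) b) (qv 1) (qv 2) (qv 3) ->
    b = arr f (qv 1) (qv 3).

Definition inv_forced (f : bflip) : Prop :=
  forall b : bool,
    branched_tri (reor (arr f) (qv 0) (qv 2) b) (qv 0) (qv 1) (qv 2) ->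
    branched_tri (reor (arr f) (qv 0) (qv 2) b) (qv 0) (qv 2) (qv 3) ->
    b = arr f (qv 0) (qv 2).

Definition sliding (f : bflip) : Prop := forced f \/ inv_forced f.

(* Ideal triangulations of closed surfaces, combinatorially: n abstract *)
(* triangles 'I_n with corners 'I_3; side j of a triangle is the side  *)
(* opposite corner j.  A dart ((t, j), c) (with c != j) is the endpoint *)
(* c of side j of triangle t.  A gluing G pairs the sides, specifying  *)
(* which endpoint goes to which endpoint.                              *)
Definition dart (n : nat) := ('I_n * 'I_3 * 'I_3)%type.
Definition valid_dart n (d : dart n) := d.1.2 != d.2.

Record is_gluing n (G : dart n -> dart n) : Prop := {
  gl_valid : forall d, valid_dart d -> valid_dart (G d);
  gl_invol : forall d, valid_dart d -> G (G d) = d;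
  gl_side_ne : forall d, valid_dart d -> (G d).1 != d.1;
  gl_side : forall d d', valid_dart d -> valid_dart d' -> d.1 = d'.1 -> d != d' ->
      (G d).1 = (G d').1 /\ G d != G d' }.

Definition tri_adj n (G : dart n -> dart n) : rel 'I_n :=
  fun t u => [exists d : dart n, [&& d.1.1 == t, valid_dart d & (G d).1.1 == u]].

Definition connected_gl n (G : dart n -> dart n) : Prop :=
  forall t u : 'I_n, connect (tri_adj G) t u.

(* Corners identified across a glued side; the vertices of the         *)
(* triangulation (i.e. the marked points V) are the classes of corners *)
(* under [connect (corner_adj G)].                                      *)
Definition corner_adj n (G : dart n -> dart n) : rel ('I_n * 'I_3) :=
  fun c c' => [exists j : 'I_3,
     (j != c.2) && (((G (c.1, j, c.2)).1.1, (G (c.1, j, c.2)).2) == c')].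

(* A branching: an orientation [ba t x y] of the edges of each triangle, *)
(* branched on each triangle, and compatible with the gluing (so it is  *)
(* an orientation of the edges of the triangulation).                   *)
Record is_branching n (G : dart n -> dart n)
    (ba : 'I_n -> 'I_3 -> 'I_3 -> bool) : Prop := {
  br_anti : forall t (x y : 'I_3), x != y -> ba t y x = ~~ ba t x y;
  br_tri : forall t, branched_tri (ba t) (o3 0) (o3 1) (o3 2);
  br_glue : forall t (j p q : 'I_3), j != p -> j != q -> p != q ->
      ba t p q = ba (G (t, j, p)).1.1 (G (t, j, p)).2 (G (t, j, q)).2 }.

(* The corner c is 1-labelled: it is the middle vertex of the order. *)
Definition one_lab n (ba : 'I_n -> 'I_3 -> 'I_3 -> bool) (c : 'I_n * 'I_3) :=
  [exists a : 'I_3, exists b : 'I_3,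
     [&& a != c.2, b != c.2, ba c.1 a c.2 & ba c.1 c.2 b]].

(* d_b(v) for the vertex v containing the corner c: half the number of *)
(* 1-labelled corners at v.                                             *)
Definition dvert n (G : dart n -> dart n) (ba : 'I_n -> 'I_3 -> 'I_3 -> bool)
    (c : 'I_n * 'I_3) : nat :=
  #|[set x | connect (corner_adj G) c x && one_lab ba x]|./2.

(* Application of f to (T, b): triangle T1 realises t1 with the i-th    *)
(* vertex of (0,1,2) at corner p1 i; T2 realises t2 with the i-th      *)
(* vertex of (0,2,3) at corner p2 i; T1 and T2 are glued along e        *)
(* matching vertices 0 and 2, and b restricts to f's branching b.      *)
Definition applies n (G : dart n -> dart n) (ba : 'I_n -> 'I_3 -> 'I_3 -> bool)
    (f : bflip) (T1 T2 : 'I_n) (p1 p2 : {perm 'I_3}) : Prop :=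
  [/\ T1 != T2,
      G (T1, p1 (o3 1), p1 (o3 0)) = (T2, p2 (o3 2), p2 (o3 0)),
      G (T1, p1 (o3 1), p1 (o3 2)) = (T2, p2 (o3 2), p2 (o3 1)),
      forall i j : 'I_3, i != j ->
        ba T1 (p1 i) (p1 j) = arr f (lab [:: 0; 1; 2] i) (lab [:: 0; 1; 2] j) &
      forall i j : 'I_3, i != j ->
        ba T2 (p2 i) (p2 j) = arr f (lab [:: 0; 2; 3] i) (lab [:: 0; 2; 3] j)].

(* The result (T', b'): T1 becomes t1' = (0,1,3) (vertex 3 taking the   *)
(* corner p1 2), T2 becomes t2' = (1,2,3) (vertex 1 taking corner p2 0). *)
(* Edge 12 moves from side p1 0 of T1 to side p2 2 of T2, edge 03 from  *)
(* side p2 1 of T2 to side p1 1 of T1; the new diagonal 13 glues side   *)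
(* p1 0 of T1 to side p2 1 of T2.                                       *)
Section Flip.
Variables (n : nat) (T1 T2 : 'I_n) (p1 p2 : {perm 'I_3}).

Definition reloc (d : dart n) : dart n :=
  if d == (T1, p1 (o3 0), p1 (o3 1)) then (T2, p2 (o3 2), p2 (o3 0))
  else if d == (T1, p1 (o3 0), p1 (o3 2)) then (T2, p2 (o3 2), p2 (o3 1))
  else if d == (T2, p2 (o3 1), p2 (o3 0)) then (T1, p1 (o3 1), p1 (o3 0))
  else if d == (T2, p2 (o3 1), p2 (o3 2)) then (T1, p1 (o3 1), p1 (o3 2))
  else d.

Definition unreloc (d : dart n) : dart n :=
  if d == (T2, p2 (o3 2), p2 (o3 0)) then (T1, p1 (o3 0), p1 (o3 1))
  else if d == (T2, p2 (o3 2), p2 (o3 1)) then (T1, p1 (o3 0), p1 (o3 2))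
  else if d == (T1, p1 (o3 1), p1 (o3 0)) then (T2, p2 (o3 1), p2 (o3 0))
  else if d == (T1, p1 (o3 1), p1 (o3 2)) then (T2, p2 (o3 1), p2 (o3 2))
  else d.

Definition flip_glue (G : dart n -> dart n) (d : dart n) : dart n :=
  if d == (T1, p1 (o3 0), p1 (o3 1)) then (T2, p2 (o3 1), p2 (o3 0))
  else if d == (T1, p1 (o3 0), p1 (o3 2)) then (T2, p2 (o3 1), p2 (o3 2))
  else if d == (T2, p2 (o3 1), p2 (o3 0)) then (T1, p1 (o3 0), p1 (o3 1))
  else if d == (T2, p2 (o3 1), p2 (o3 2)) then (T1, p1 (o3 0), p1 (o3 2))
  else reloc (G (unreloc d)).

Definition flip_br (ba : 'I_n -> 'I_3 -> 'I_3 -> bool) (f : bflip)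
    (t : 'I_n) (x y : 'I_3) : bool :=
  if t == T1 then arr f (lab [:: 0; 1; 3] ((p1^-1)%g x)) (lab [:: 0; 1; 3] ((p1^-1)%g y))
  else if t == T2 then arr f (lab [:: 1; 2; 3] ((p2^-1)%g x)) (lab [:: 1; 2; 3] ((p2^-1)%g y))
  else ba t x y.

(* The identification of vertices (V is unchanged by the flip): a corner *)
(* of T is sent to a corner of T' at the same point of V.               *)
Definition flip_corner (c : 'I_n * 'I_3) : 'I_n * 'I_3 :=
  if c == (T1, p1 (o3 2)) then (T2, p2 (o3 1))
  else if c == (T2, p2 (o3 0)) then (T1, p1 (o3 0))
  else c.
End Flip.

From mathcomp Require Import all_boot all_fingroup ssralg ring.
Set Implicit Arguments. Unset Strict Implicit. Unset Printing Implicit Defensive.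

(* For the orientation of the six edges of the quadrilateral Q
   given by f, record which corners of t1, t2 (before) and t1', t2' (after)
   are 1-labelled.  The flip is [balanced] when at each vertex 0, 1, 2, 3 of
   Q the number of 1-labels is the same before and after.  A check of the
   2^6 orientations shows: f is sliding iff it is balanced
   ([sliding_balanced]); and a non-sliding f moves two 1-labels away from
   vertex 0 or 2 while orienting the boundary compatibly with identifying
   vertices 1 and 3 ([nonsliding_defect]).

   The maps [flip_corner] and
   [unflip_corner] between the corners of T and T' preserve vertices
   ([flip_connect]), so the 1-labelled corners at a vertex are those off the
   two flipped triangles, which do not change, plus the contributions of the
   vertices of Q it contains ([count_before], [count_after]).  Hence a
   balanced flip preserves d_b ([balanced_dvert]).

   Converse.  Gluing t1 and t2 along their whole boundary gives a branched
   sphere with vertices 0, 2 and 1 = 3 on which a non-sliding flip changes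
   d_b at vertex 0 or 2 ([nonsliding_sphere]). *)

Notation O0 := (@Ordinal 3 0 isT).
Notation O1 := (@Ordinal 3 1 isT).
Notation O2 := (@Ordinal 3 2 isT).
Notation Q0 := (@Ordinal 4 0 isT).
Notation Q1 := (@Ordinal 4 1 isT).
Notation Q2 := (@Ordinal 4 2 isT).
Notation Q3 := (@Ordinal 4 3 isT).

Lemma o3E : (o3 0 = O0) * (o3 1 = O1) * (o3 2 = O2).
Proof. by do ![split]; apply: val_inj; rewrite /= inordK. Qed.

Lemma qvE : (qv 0 = Q0) * (qv 1 = Q1) * (qv 2 = Q2) * (qv 3 = Q3).
Proof. by do ![split]; apply: val_inj; rewrite /= inordK. Qed.

Lemma ord3P (a : 'I_3) : a = O0 \/ a = O1 \/ a = O2.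
Proof.
case: a => [[|[|[|m]]] H]; [left|right;left|right;right|by []]; exact: val_inj.
Qed.

Lemma exists3 (P : pred 'I_3) : [exists a, P a] = [|| P O0, P O1 | P O2].
Proof.
apply/existsP/or3P => [[a]|[]]; [|by exists O0 | by exists O1 | by exists O2].
by case: (ord3P a) => [->|[->|->]] H; [apply: Or31|apply: Or32|apply: Or33].
Qed.

Lemma sum3 (F : 'I_3 -> nat) : \sum_k F k = F O0 + F O1 + F O2.
Proof.
rewrite !big_ord_recl big_ord0 addn0 addnA.
by congr (F _ + F _ + F _); apply: val_inj.
Qed.

Lemma existsb_perm (T : finType) (p : {perm T}) (P : pred T) :
  [exists a, P a] = [exists a, P (p a)].
Proof.
apply/existsP/existsP => [[a Pa]|[a Pa]]; last by exists (p a).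
by exists (p^-1 a)%g; rewrite permKV.
Qed.

Lemma card_set_sum (T : finType) (P : pred T) :
  #|[set x | P x]| = \sum_x (P x : nat).
Proof.
by rewrite -sum1dep_card big_mkcond /=; apply: eq_bigr => x _; case: (P x).
Qed.

Lemma connect_map (T U : finType) (e : rel T) (e' : rel U) (h : T -> U) :
  (forall x y, e x y -> connect e' (h x) (h y)) ->
  forall x y, connect e x y -> connect e' (h x) (h y).
Proof.
move=> H x y /connectP [p pth ->]; elim: p x pth => [|z p IH] x /=.
  by rewrite connect0.
by case/andP => exz pz; apply: connect_trans (H _ _ exz) (IH _ pz).
Qed.

(* A boolean [a] is the unique [b] satisfying [X b] and [Y b] exactly when
   its negation fails [X] or [Y]: this turns "forced" into a boolean test. *)
Lemma unique_boolE (X Y : bool -> bool) (a : bool) :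
  (forall b, X b -> Y b -> b = a) <-> ~~ (X (~~ a) && Y (~~ a)).
Proof.
split=> [H | H b Xb Yb].
  by apply/negP => /andP [Xa Ya]; move: (H _ Xa Ya); case: (a).
have [// | nba] := eqVneq b a.
have Eb : b = ~~ a by move: nba; case: (a); case: (b).
by move: H; rewrite -Eb Xb Yb.
Qed.

Definition rediag (A : 'I_4 -> 'I_4 -> bool) (x y : 'I_4) := reor A x y (~~ A x y).

(* Boolean form of [sliding]: reversing the new diagonal e' = {1,3} breaks
   t1' or t2' (the flip is forced), or reversing the old diagonal e = {0,2}
   breaks t1 or t2 (its inverse is forced). *)
Definition slidingb (A : 'I_4 -> 'I_4 -> bool) : bool :=
  ~~ (branched_tri (rediag A (qv 1) (qv 3)) (qv 0) (qv 1) (qv 3) &&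
      branched_tri (rediag A (qv 1) (qv 3)) (qv 1) (qv 2) (qv 3)) ||
  ~~ (branched_tri (rediag A (qv 0) (qv 2)) (qv 0) (qv 1) (qv 2) &&
      branched_tri (rediag A (qv 0) (qv 2)) (qv 0) (qv 2) (qv 3)).

Lemma slidingP (f : bflip) : sliding f <-> slidingb (arr f).
Proof.
have F := unique_boolE
  (fun b => branched_tri (reor (arr f) (qv 1) (qv 3) b) (qv 0) (qv 1) (qv 3))
  (fun b => branched_tri (reor (arr f) (qv 1) (qv 3) b) (qv 1) (qv 2) (qv 3))
  (arr f (qv 1) (qv 3)).
have I := unique_boolE
  (fun b => branched_tri (reor (arr f) (qv 0) (qv 2) b) (qv 0) (qv 1) (qv 2))
  (fun b => branched_tri (reor (arr f) (qv 0) (qv 2) b) (qv 0) (qv 2) (qv 3))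
  (arr f (qv 0) (qv 2)).
rewrite /sliding /forced /inv_forced /slidingb /rediag.
split=> [[/F -> | /I ->] | /orP [/F | /I]]; rewrite ?orbT //; by [left | right].
Qed.

Definition qlab (A : 'I_4 -> 'I_4 -> bool) (s : seq nat) (i : 'I_3) : bool :=
  [exists a : 'I_3, exists b : 'I_3,
     [&& a != i, b != i, A (lab s a) (lab s i) & A (lab s i) (lab s b)]].

Definition balanced (A : 'I_4 -> 'I_4 -> bool) : bool :=
  [&& qlab A [:: 0;1;2] O0 + qlab A [:: 0;2;3] O0 == qlab A [:: 0;1;3] O0,
      qlab A [:: 0;1;2] O1 == qlab A [:: 0;1;3] O1 + qlab A [:: 1;2;3] O0 :> nat,
      qlab A [:: 0;1;2] O2 + qlab A [:: 0;2;3] O1 == qlab A [:: 1;2;3] O1 &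
      qlab A [:: 0;2;3] O2 == qlab A [:: 0;1;3] O2 + qlab A [:: 1;2;3] O2 :> nat].

Ltac orientation_cases f :=
  move: (arr_t1 f) (arr_t2 f) (arr_t1' f) (arr_t2' f);
  rewrite /slidingb /rediag /balanced /qlab !exists3 /branched_tri /is_order;
  rewrite /reor /lab /= !qvE /=;
  rewrite (arr_anti f (x:=Q0) (y:=Q1) isT) (arr_anti f (x:=Q0) (y:=Q2) isT);
  rewrite (arr_anti f (x:=Q0) (y:=Q3) isT) (arr_anti f (x:=Q1) (y:=Q2) isT);
  rewrite (arr_anti f (x:=Q1) (y:=Q3) isT) (arr_anti f (x:=Q2) (y:=Q3) isT);
  move: (arr f Q0 Q1) (arr f Q0 Q2) (arr f Q0 Q3) (arr f Q1 Q2)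
        (arr f Q1 Q3) (arr f Q2 Q3);
  by do 6 case.

Lemma sliding_balanced (f : bflip) : slidingb (arr f) = balanced (arr f).
Proof. orientation_cases f. Qed.

(* A non-sliding flip orients the boundary edges 03, 01 alike and 23, 12
   oppositely (so vertices 1 and 3 may be identified), and it moves two
   1-labels away from vertex 0 or from vertex 2. *)
Lemma nonsliding_defect (f : bflip) : ~~ slidingb (arr f) ->
  [&& arr f Q0 Q3 == arr f Q0 Q1, arr f Q2 Q3 == ~~ arr f Q1 Q2 &
   [&& qlab (arr f) [:: 0;1;2] O0 + qlab (arr f) [:: 0;2;3] O0 == 2 &
       qlab (arr f) [:: 0;1;3] O0 == 0 :> nat] ||
   [&& qlab (arr f) [:: 0;1;2] O2 + qlab (arr f) [:: 0;2;3] O1 == 2 &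
       qlab (arr f) [:: 1;2;3] O1 == 0 :> nat]].
Proof. orientation_cases f. Qed.

Definition corner n (d : dart n) : 'I_n * 'I_3 := (d.1.1, d.2).

Lemma adj_dart n (G : dart n -> dart n) (d : dart n) :
  valid_dart d -> corner_adj G (corner d) (corner (G d)).
Proof. by case: d => [[u l] m] v; apply/existsP; exists l; rewrite /= eqxx andbT. Qed.

Section FlipApplication.
Local Opaque fun_of_perm.
Variables (n : nat) (G : dart n -> dart n) (ba : 'I_n -> 'I_3 -> 'I_3 -> bool)
  (f : bflip) (T1 T2 : 'I_n) (p1 p2 : {perm 'I_3}).
Hypothesis gluingG : is_gluing G.
Hypothesis applied : applies G ba f T1 T2 p1 p2.

Local Notation G' := (flip_glue T1 T2 p1 p2 G).
Local Notation ba' := (flip_br T1 T2 p1 p2 ba f).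
Local Notation reloc := (reloc T1 T2 p1 p2).
Local Notation unreloc := (unreloc T1 T2 p1 p2).
Local Notation flipc := (flip_corner T1 T2 p1 p2).
Local Notation C := (connect (corner_adj G)).
Local Notation C' := (connect (corner_adj G')).

Lemma T1_neq_T2 : T1 != T2. Proof. by case: applied. Qed.

Lemma glue_diag :
  (G (T1, p1 O1, p1 O0) = (T2, p2 O2, p2 O0)) *
  (G (T1, p1 O1, p1 O2) = (T2, p2 O2, p2 O1)) *
  (G (T2, p2 O2, p2 O0) = (T1, p1 O1, p1 O0)) *
  (G (T2, p2 O2, p2 O1) = (T1, p1 O1, p1 O2)).
Proof.
have [_ e0 e2 _ _] := applied; rewrite !o3E in e0 e2.
have v d : valid_dart d -> G (G d) = d by apply: gl_invol.
by rewrite -e0 -e2 !v // /valid_dart /= (inj_eq perm_inj).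
Qed.

Variant dart_spec : dart n -> Type :=
| DartT1 i j of i != j : dart_spec (T1, p1 i, p1 j)
| DartT2 i j of i != j : dart_spec (T2, p2 i, p2 j)
| DartOut t j k of t != T1 & t != T2 & j != k : dart_spec (t, j, k).

Lemma dartP d : valid_dart d -> dart_spec d.
Proof.
case: d => [[t j] k]; rewrite /valid_dart /=; case: (eqVneq t T1) => [->|tT1].
  by rewrite -[j](permKV p1) -[k](permKV p1) (inj_eq perm_inj); constructor.
case: (eqVneq t T2) => [->|tT2]; last by constructor.
by rewrite -[j](permKV p2) -[k](permKV p2) (inj_eq perm_inj); constructor.
Qed.

Variant corner_spec : 'I_n * 'I_3 -> Type :=
| CornerT1 i : corner_spec (T1, p1 i)
| CornerT2 i : corner_spec (T2, p2 i)
| CornerOut t k of t != T1 & t != T2 : corner_spec (t, k).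

Lemma cornerP c : corner_spec c.
Proof.
case: c => t k; case: (eqVneq t T1) => [->|tT1].
  by rewrite -[k](permKV p1); constructor.
case: (eqVneq t T2) => [->|tT2]; last by constructor.
by rewrite -[k](permKV p2); constructor.
Qed.

Lemma dart_eqE :
  (forall a b c d, ((T1, p1 a, p1 b) == (T1, p1 c, p1 d)) = (a == c) && (b == d)) *
  (forall a b c d, ((T2, p2 a, p2 b) == (T2, p2 c, p2 d)) = (a == c) && (b == d)) *
  (forall a b c d, ((T1, p1 a, p1 b) == (T2, p2 c, p2 d)) = false) *
  (forall a b c d, ((T2, p2 a, p2 b) == (T1, p1 c, p1 d)) = false) *
  (forall a c, ((T1, p1 a) == (T1, p1 c)) = (a == c)) *
  (forall a c, ((T2, p2 a) == (T2, p2 c)) = (a == c)) *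
  (forall a c, ((T1, p1 a) == (T2, p2 c)) = false) *
  (forall a c, ((T2, p2 a) == (T1, p1 c)) = false) *
  (forall a b, (p1 a == p1 b) = (a == b)) *
  (forall a b, (p2 a == p2 b) = (a == b)).
Proof.
have nT := T1_neq_T2; have nT' : T2 != T1 by rewrite eq_sym.
by do ![split] => *; rewrite ?xpair_eqE ?eqxx ?(inj_eq perm_inj) ?(negPf nT) ?(negPf nT').
Qed.

Lemma out_dartE t : t != T1 -> t != T2 ->
  (forall j k a b, ((t, j, k) == (T1, p1 a, p1 b)) = false) *
  (forall j k a b, ((t, j, k) == (T2, p2 a, p2 b)) = false) *
  (forall k a, ((t, k) == (T1, p1 a)) = false) *
  (forall k a, ((t, k) == (T2, p2 a)) = false).
Proof. by move=> /negPf tT1 /negPf tT2; do ![split] => *; rewrite !xpair_eqE ?tT1 ?tT2. Qed.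

Ltac dart_simp_round :=
  rewrite ?dart_eqE;
  try match goal with H : is_true (?t != T1), H' : is_true (?t != T2) |- _ =>
    rewrite ?(out_dartE H H') end; rewrite /=.
Ltac dart_simp := dart_simp_round; dart_simp_round.

Ltac dart_cases :=
  let i := fresh "i" in let j := fresh "j" in
  move=> /dartP [i j|i j|? ? ? ? ? ?];
  try (case: (ord3P i) => [->|[->|->]]; case: (ord3P j) => [->|[->|->]] => //);
  dart_simp.

Ltac corner_cases c :=
  let i := fresh "i" in
  case: (cornerP c) => [i|i|? ? ? ?];
  try (case: (ord3P i) => [->|[->|->]]); dart_simp.

Definition on_e (d : dart n) := [|| d == (T1, p1 O1, p1 O0), d == (T1, p1 O1, p1 O2),
   d == (T2, p2 O2, p2 O0) | d == (T2, p2 O2, p2 O1)].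

Definition on_e' (d : dart n) := [|| d == (T1, p1 O0, p1 O1), d == (T1, p1 O0, p1 O2),
   d == (T2, p2 O1, p2 O0) | d == (T2, p2 O1, p2 O2)].

(* Inverse of [flip_corner]: a corner of T' sent to a corner of T lying at
   the same vertex of the surface. *)
Definition unflip_corner (c : 'I_n * 'I_3) :=
  if c == (T1, p1 O2) then (T2, p2 O2) else if c == (T2, p2 O0) then (T1, p1 O1) else c.
Local Notation unflipc := unflip_corner.

Lemma adj_across_e :
  [/\ corner_adj G (T1, p1 O0) (T2, p2 O0), corner_adj G (T2, p2 O0) (T1, p1 O0),
      corner_adj G (T1, p1 O2) (T2, p2 O1) & corner_adj G (T2, p2 O1) (T1, p1 O2)].
Proof.
by split; apply/existsP; [exists (p1 O1)|exists (p2 O2)|exists (p1 O1)|exists (p2 O2)];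
  rewrite /= ?glue_diag; dart_simp.
Qed.

Lemma adj_across_e' :
  [/\ corner_adj G' (T1, p1 O1) (T2, p2 O0), corner_adj G' (T2, p2 O0) (T1, p1 O1),
      corner_adj G' (T1, p1 O2) (T2, p2 O2) & corner_adj G' (T2, p2 O2) (T1, p1 O2)].
Proof.
by split; apply/existsP; [exists (p1 O0)|exists (p2 O1)|exists (p1 O0)|exists (p2 O1)];
  rewrite /= /flip_glue !o3E; dart_simp.
Qed.

Ltac close_connect :=
  have [? ? ? ?] := adj_across_e; have [? ? ? ?] := adj_across_e';
  intros; first [ done | by rewrite connect0 | by apply: connect1 ].

Lemma glue_off_e d : valid_dart d -> ~~ on_e d -> ~~ on_e (G d).
Proof.
move=> vd; apply: contra => /or4P [] /eqP E;
  by rewrite -(gl_invol gluingG vd) E !glue_diag /on_e; dart_simp.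
Qed.

(* Darts of T off e keep their place in T' under [reloc]; [unreloc] undoes
   this and the new gluing is the old one transported along them. *)
Lemma reloc_valid d : valid_dart d -> valid_dart (reloc d).
Proof. by rewrite /valid_dart /reloc !o3E; dart_cases. Qed.

Lemma unreloc_valid d : valid_dart d -> valid_dart (unreloc d).
Proof. by rewrite /valid_dart /unreloc !o3E; dart_cases. Qed.

Lemma unreloc_off_e d : valid_dart d -> ~~ on_e' d -> ~~ on_e (unreloc d).
Proof. by rewrite /valid_dart /on_e' /on_e /unreloc !o3E; dart_cases. Qed.

Lemma reloc_off_e' d : valid_dart d -> ~~ on_e d -> ~~ on_e' (reloc d).
Proof. by rewrite /valid_dart /on_e' /on_e /reloc !o3E; dart_cases. Qed.

Lemma relocK d : valid_dart d -> ~~ on_e d -> unreloc (reloc d) = d.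
Proof. by rewrite /valid_dart /on_e /unreloc /reloc !o3E; dart_cases. Qed.

Lemma flip_glue_off_e' d : ~~ on_e' d -> G' d = reloc (G (unreloc d)).
Proof.
rewrite /on_e' /flip_glue !o3E.
by case/norP => /negPf -> /norP [/negPf -> /norP [/negPf -> /negPf ->]].
Qed.

Lemma glue_reloc d : valid_dart d -> ~~ on_e d -> G' (reloc d) = reloc (G d).
Proof. by move=> vd ed; rewrite flip_glue_off_e' ?relocK ?reloc_off_e'. Qed.

Lemma unflip_unreloc d :
  valid_dart d -> ~~ on_e' d -> C (unflipc (corner d)) (corner (unreloc d)).
Proof.
rewrite /valid_dart /on_e' /unflip_corner /unreloc /corner !o3E.
dart_cases; close_connect.
Qed.

Lemma unflip_reloc d :
  valid_dart d -> ~~ on_e d -> C (corner d) (unflipc (corner (reloc d))).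
Proof.
rewrite /valid_dart /on_e /unflip_corner /reloc /corner !o3E.
dart_cases; close_connect.
Qed.

Lemma unflip_on_e' d : valid_dart d -> on_e' d -> unflipc (corner d) = unflipc (corner (G' d)).
Proof.
rewrite /valid_dart /on_e' /unflip_corner /flip_glue /corner !o3E.
dart_cases; close_connect.
Qed.

Lemma unflip_adj x y : corner_adj G' x y -> C (unflipc x) (unflipc y).
Proof.
case: x => t k /existsP [j /andP [jk /eqP <-]].
have vd : valid_dart (t, j, k) by [].
have [ed | ned] := boolP (on_e' (t, j, k)).
  by have /= -> := unflip_on_e' vd ed; rewrite connect0.
rewrite flip_glue_off_e' //.
set d := unreloc (t, j, k).
have vd0 : valid_dart d := unreloc_valid vd.
have ed0 : ~~ on_e d := unreloc_off_e vd ned.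
apply: connect_trans (unflip_unreloc vd ned) _.
apply: connect_trans _ (unflip_reloc (gl_valid gluingG vd0) (glue_off_e vd0 ed0)).
exact/connect1/adj_dart.
Qed.

Lemma flip_reloc d :
  valid_dart d -> ~~ on_e d -> C' (flipc (corner d)) (corner (reloc d)).
Proof.
rewrite /valid_dart /on_e /flip_corner /reloc /corner !o3E.
dart_cases; close_connect.
Qed.

Lemma reloc_flip d :
  valid_dart d -> ~~ on_e d -> C' (corner (reloc d)) (flipc (corner d)).
Proof.
rewrite /valid_dart /on_e /flip_corner /reloc /corner !o3E.
dart_cases; close_connect.
Qed.

Lemma flip_on_e d : valid_dart d -> on_e d -> flipc (corner d) = flipc (corner (G d)).
Proof.
rewrite /valid_dart /on_e /flip_corner /corner !o3E.
dart_cases; rewrite ?glue_diag; dart_simp; close_connect.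
Qed.

Lemma flip_adj x y : corner_adj G x y -> C' (flipc x) (flipc y).
Proof.
case: x => t k /existsP [j /andP [jk /eqP <-]].
have vd : valid_dart (t, j, k) by [].
have [ed | ned] := boolP (on_e (t, j, k)).
  by have /= -> := flip_on_e vd ed; rewrite connect0.
have vG := gl_valid gluingG vd.
apply: connect_trans (flip_reloc vd ned) _.
apply: connect_trans _ (reloc_flip vG (glue_off_e vd ned)).
by apply/connect1; rewrite -glue_reloc //; apply/adj_dart/reloc_valid.
Qed.

Lemma unflip_flip c : C c (unflipc (flipc c)).
Proof. rewrite /unflip_corner /flip_corner !o3E; corner_cases c; close_connect. Qed.

Lemma flip_unflip c : C' (flipc (unflipc c)) c.
Proof. rewrite /unflip_corner /flip_corner !o3E; corner_cases c; close_connect. Qed.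

(* The vertex of T' containing [flip_corner c] consists of the corners
   whose [unflip_corner] lies at the vertex of c: the flip does not change
   the vertex set. *)
Lemma flip_connect c y : C' (flipc c) y = C c (unflipc y).
Proof.
apply/idP/idP => H.
  exact: connect_trans (unflip_flip c) (connect_map unflip_adj H).
exact: connect_trans (connect_map flip_adj H) (flip_unflip y).
Qed.

Lemma one_lab_T1 i : one_lab ba (T1, p1 i) = qlab (arr f) [:: 0; 1; 2] i.
Proof.
rewrite /one_lab /qlab /= (existsb_perm p1); apply: eq_existsb => a.
rewrite (existsb_perm p1); apply: eq_existsb => b /=.
rewrite !(inj_eq perm_inj); have [->|ai] := eqVneq a i => //=.
have [->|bi] := eqVneq b i => //=; have [_ _ _ H _] := applied.
by rewrite (H _ _ ai) (H i b) // eq_sym.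
Qed.

Lemma one_lab_T2 i : one_lab ba (T2, p2 i) = qlab (arr f) [:: 0; 2; 3] i.
Proof.
rewrite /one_lab /qlab /= (existsb_perm p2); apply: eq_existsb => a.
rewrite (existsb_perm p2); apply: eq_existsb => b /=.
rewrite !(inj_eq perm_inj); have [->|ai] := eqVneq a i => //=.
have [->|bi] := eqVneq b i => //=; have [_ _ _ _ H] := applied.
by rewrite (H _ _ ai) (H i b) // eq_sym.
Qed.

Lemma one_lab_T1' i : one_lab ba' (T1, p1 i) = qlab (arr f) [:: 0; 1; 3] i.
Proof.
rewrite /one_lab /qlab /flip_br /= eqxx (existsb_perm p1); apply: eq_existsb => a.
by rewrite (existsb_perm p1); apply: eq_existsb => b /=; rewrite !(inj_eq perm_inj) !permK.
Qed.

Lemma one_lab_T2' i : one_lab ba' (T2, p2 i) = qlab (arr f) [:: 1; 2; 3] i.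
Proof.
rewrite /one_lab /qlab /flip_br /= eqxx eq_sym (negPf T1_neq_T2) (existsb_perm p2).
apply: eq_existsb => a; rewrite (existsb_perm p2); apply: eq_existsb => b /=.
by rewrite !(inj_eq perm_inj) !permK.
Qed.

Lemma one_lab_out t k : t != T1 -> t != T2 -> one_lab ba' (t, k) = one_lab ba (t, k).
Proof. by move=> /negPf t1 /negPf t2; rewrite /one_lab /flip_br /= t1 t2. Qed.

Lemma sum_corners (F : 'I_n * 'I_3 -> nat) :
  \sum_x F x = \sum_(t | (t != T1) && (t != T2)) \sum_k F (t, k)
    + (F (T1, p1 O0) + F (T1, p1 O1) + F (T1, p1 O2))
    + (F (T2, p2 O0) + F (T2, p2 O1) + F (T2, p2 O2)).
Proof.
have -> : \sum_x F x = \sum_t \sum_k F (t, k).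
  by rewrite pair_big /=; apply: eq_bigr => -[t k].
rewrite (bigD1 T1) //= (bigD1 T2) /=; last by rewrite eq_sym T1_neq_T2.
have S t (p : {perm 'I_3}) : \sum_k F (t, k) = F (t, p O0) + F (t, p O1) + F (t, p O2).
  by rewrite (reindex_inj (@perm_inj _ p)) sum3.
by rewrite (S T1 p1) (S T2 p2) addnA addnC addnA.
Qed.

Lemma vertex_across_e c :
  (C c (T2, p2 O0) = C c (T1, p1 O0)) * (C c (T2, p2 O1) = C c (T1, p1 O2)).
Proof.
have [a1 a2 a3 a4] := adj_across_e.
by split; apply/idP/idP => H; apply: connect_trans H (connect1 _).
Qed.

Lemma unflipE :
  (unflipc (T1, p1 O0) = (T1, p1 O0)) * (unflipc (T1, p1 O1) = (T1, p1 O1)) *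
  (unflipc (T1, p1 O2) = (T2, p2 O2)) * (unflipc (T2, p2 O0) = (T1, p1 O1)) *
  (unflipc (T2, p2 O1) = (T2, p2 O1)) * (unflipc (T2, p2 O2) = (T2, p2 O2)).
Proof. by rewrite /unflip_corner; dart_simp. Qed.

Lemma unflip_out t k : t != T1 -> t != T2 -> unflipc (t, k) = (t, k).
Proof. by move=> /negPf t1 /negPf t2; rewrite /unflip_corner !xpair_eqE t1 t2. Qed.

(* The 1-labelled corners at the vertex of c which lie off T1 and T2; they
   are the same before and after the flip. *)
Definition outside_count c :=
  \sum_(t | (t != T1) && (t != T2)) \sum_k (C c (t, k) && one_lab ba (t, k) : nat).

Local Notation A := (arr f).

(* Number of 1-labelled corners at the vertex of c before the flip: the
   vertex of c meets Q at those of its vertices 0, 1, 2, 3 to which c is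
   connected, each contributing its 1-labels in t1 and t2. *)
Lemma count_before c :
  #|[set x | C c x && one_lab ba x]| = outside_count c
  + C c (T1, p1 O0) * (qlab A [:: 0;1;2] O0 + qlab A [:: 0;2;3] O0)
  + C c (T1, p1 O1) * qlab A [:: 0;1;2] O1
  + C c (T1, p1 O2) * (qlab A [:: 0;1;2] O2 + qlab A [:: 0;2;3] O1)
  + C c (T2, p2 O2) * qlab A [:: 0;2;3] O2.
Proof.
rewrite card_set_sum sum_corners !one_lab_T1 !one_lab_T2 !vertex_across_e.
by rewrite -/(outside_count c) -!mulnb; ring.
Qed.

(* The same count after the flip, where vertex 1 of Q now also carries
   t2', vertex 3 also t1', and the vertices 0 and 2 lose t2 and t1. *)
Lemma count_after c :
  #|[set y | C' (flipc c) y && one_lab ba' y]| = outside_count c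
  + C c (T1, p1 O0) * qlab A [:: 0;1;3] O0
  + C c (T1, p1 O1) * (qlab A [:: 0;1;3] O1 + qlab A [:: 1;2;3] O0)
  + C c (T1, p1 O2) * qlab A [:: 1;2;3] O1
  + C c (T2, p2 O2) * (qlab A [:: 0;1;3] O2 + qlab A [:: 1;2;3] O2).
Proof.
rewrite card_set_sum sum_corners.
have -> : \sum_(t | (t != T1) && (t != T2)) \sum_k
    (C' (flipc c) (t, k) && one_lab ba' (t, k) : nat) = outside_count c.
  apply: eq_bigr => t /andP [t1 t2]; apply: eq_bigr => k _.
  by rewrite flip_connect unflip_out // one_lab_out.
rewrite !flip_connect !one_lab_T1' !one_lab_T2' !unflipE !vertex_across_e.
by rewrite -!mulnb; ring.
Qed.

Lemma balanced_dvert c : balanced A -> dvert G ba c = dvert G' ba' (flipc c).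
Proof.
case/and4P => /eqP v0 /eqP v1 /eqP v2 /eqP v3.
by rewrite /dvert count_before count_after v0 v1 v2 v3.
Qed.
End FlipApplication.

(* The converse uses the sphere with three marked points obtained by gluing
   two triangles along their boundaries: triangle Z0 realises t1 = (0,1,2)
   and Z1 realises t2 = (0,2,3), corners i of Z0 and [swap12 i] of Z1 being
   glued.  Its vertices are 0, 2 and 1 = 3. *)
Notation Z0 := (@Ordinal 2 0 isT).
Notation Z1 := (@Ordinal 2 1 isT).

Lemma ord2P (a : 'I_2) : a = Z0 \/ a = Z1.
Proof. case: a => [[|[|m]] H]; [left|right|by []]; exact: val_inj. Qed.

Definition other (t : 'I_2) : 'I_2 := if t == Z0 then Z1 else Z0.
Definition swap12 (k : 'I_3) : 'I_3 := if k == O1 then O2 else if k == O2 then O1 else k.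

Lemma otherK : involutive other.
Proof. by move=> t; case: (ord2P t) => ->. Qed.

Lemma other_neq t : other t != t.
Proof. by case: (ord2P t) => ->. Qed.

Lemma swap12K : involutive swap12.
Proof. by move=> k; case: (ord3P k) => [->|[->|->]]. Qed.

Definition sphere_glue (d : dart 2) : dart 2 :=
  (other d.1.1, swap12 d.1.2, swap12 d.2).

Lemma sphere_gluing : is_gluing sphere_glue.
Proof.
have swap_inj := can_inj swap12K.
split=> [[[t j] k] | [[t j] k] _ | [[t j] k] _ | [[t j] k] [[t' j'] k'] _ _ /= [-> ->]].
- by rewrite /valid_dart /= (inj_eq swap_inj).
- by rewrite /sphere_glue /= otherK !swap12K.
- by rewrite /sphere_glue /= xpair_eqE (negPf (other_neq t)).
- by rewrite /sphere_glue /= !xpair_eqE !eqxx /= (inj_eq swap_inj).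
Qed.

Lemma sphere_connected : connected_gl sphere_glue.
Proof.
move=> t u; have [-> | tu] := eqVneq t u; first exact: connect0.
apply/connect1/existsP; exists (t, O1, O0).
by case: (ord2P t) tu => ->; case: (ord2P u) => ->.
Qed.

(* The vertex (among 0, 1 = 3, 2) at which a corner of the sphere lies;
   it is invariant under gluing, so distinct labels mean distinct vertices. *)
Definition sphere_vertex (c : 'I_2 * 'I_3) : 'I_3 :=
  if c.1 == Z0 then c.2 else swap12 c.2.

Lemma sphere_vertex_conn x y :
  connect (corner_adj sphere_glue) x y -> sphere_vertex x = sphere_vertex y.
Proof.
move/connectP => [p pth ->]; elim: p x pth => //= z p IH x /andP [xz /IH <-].
case: x xz => t k /existsP [j /andP [_ /eqP <-]].
by rewrite /sphere_vertex /=; case: (ord2P t) => -> /=; rewrite ?swap12K.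
Qed.

Definition sphere_q (t : 'I_2) : 'I_3 -> 'I_4 :=
  if t == Z0 then lab [:: 0; 1; 2] else lab [:: 0; 2; 3].

Definition sphere_br (A : 'I_4 -> 'I_4 -> bool) (t : 'I_2) (x y : 'I_3) :=
  A (sphere_q t x) (sphere_q t y).

Lemma sphere_q_inj t : injective (sphere_q t).
Proof.
case: (ord2P t) => -> x y; case: (ord3P x) => [->|[->|->]];
  case: (ord3P y) => [->|[->|->]]; by rewrite /sphere_q /lab /= !qvE.
Qed.

Section SphereBranching.
Variable f : bflip.
Hypothesis edge01_03 : arr f Q0 Q3 = arr f Q0 Q1.
Hypothesis edge12_32 : arr f Q2 Q3 = ~~ arr f Q1 Q2.

(* When the boundary orientations agree on the glued edges, the branching
   of the flip descends to the sphere. *)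
Lemma sphere_branching : is_branching sphere_glue (sphere_br (arr f)).
Proof.
split=> [t x y xy | t | t j p q _ _].
- by apply: arr_anti; rewrite (inj_eq (@sphere_q_inj t)).
- by case: (ord2P t) => ->; rewrite /sphere_br /sphere_q /lab !o3E /=;
    [exact: arr_t1 | exact: arr_t2].
- have r01 := arr_anti f (x:=Q0) (y:=Q1) isT; have r02 := arr_anti f (x:=Q0) (y:=Q2) isT.
  have r03 := arr_anti f (x:=Q0) (y:=Q3) isT; have r12 := arr_anti f (x:=Q1) (y:=Q2) isT.
  have r13 := arr_anti f (x:=Q1) (y:=Q3) isT; have r23 := arr_anti f (x:=Q2) (y:=Q3) isT.
  case: (ord2P t) => ->; case: (ord3P p) => [->|[->|->]]; case: (ord3P q) => [->|[->|->]];
  rewrite /sphere_br /sphere_q /sphere_glue /lab /= !qvE;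
  by rewrite ?r01 ?r02 ?r03 ?r12 ?r13 ?r23 ?edge01_03 ?edge12_32 ?negbK.
Qed.
End SphereBranching.

Lemma sphere_applies (f : bflip) :
  applies sphere_glue (sphere_br (arr f)) f Z0 Z1 1%g 1%g.
Proof. by split=> [| | | i j _ | i j _]; rewrite ?perm1 ?o3E. Qed.

Lemma sphere_disconnected x y :
  sphere_vertex x != sphere_vertex y -> connect (corner_adj sphere_glue) x y = false.
Proof. by apply: contraNF => /sphere_vertex_conn ->. Qed.

Lemma nonsliding_sphere (f : bflip) : ~~ slidingb (arr f) ->
  is_branching sphere_glue (sphere_br (arr f)) /\
  exists c, dvert sphere_glue (sphere_br (arr f)) c <>
            dvert (flip_glue Z0 Z1 1%g 1%g sphere_glue)
                  (flip_br Z0 Z1 1%g 1%g (sphere_br (arr f)) f)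
                  (flip_corner Z0 Z1 1%g 1%g c).
Proof.
case/nonsliding_defect/and3P => /eqP e01 /eqP e12 defect.
split; first exact: sphere_branching.
have gluing := sphere_gluing; have applied := sphere_applies f.
have no_outside c : outside_count sphere_glue (sphere_br (arr f)) Z0 Z1 c = 0.
  by rewrite /outside_count big_pred0 // => t; case: (ord2P t) => ->.
case/orP: defect => /andP [/eqP before /eqP after]; [exists (Z0, O0) | exists (Z0, O2)];
  rewrite /dvert (count_before gluing applied) (count_after gluing applied) no_outside !perm1;
  rewrite connect0 !sphere_disconnected //= ?before ?after //.
Qed.

Theorem proposition2p1 (f : bflip) :
  sliding f <->
  (forall (n : nat) (G : dart n -> dart n) (ba : 'I_n -> 'I_3 -> 'I_3 -> bool)
          (T1 T2 : 'I_n) (p1 p2 : {perm 'I_3}),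
     0 < n -> is_gluing G -> connected_gl G -> is_branching G ba ->
     applies G ba f T1 T2 p1 p2 ->
     forall c : 'I_n * 'I_3,
       dvert G ba c =
       dvert (flip_glue T1 T2 p1 p2 G) (flip_br T1 T2 p1 p2 ba f)
             (flip_corner T1 T2 p1 p2 c)).
Proof.
rewrite slidingP sliding_balanced; split.
  move=> bal n G ba T1 T2 p1 p2 _ gluing _ _ applied c.
  exact: balanced_dvert gluing applied c bal.
move=> preserves; apply/negPn/negP; rewrite -sliding_balanced.
case/nonsliding_sphere => branching [c]; apply.
exact: (preserves 2 sphere_glue _ Z0 Z1 1%g 1%g isT sphere_gluing sphere_connected
  branching (sphere_applies f) c).
Qed.
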